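(* The Hoffman–Singleton graph $HS$ satisfies $\alpha_{\mathrm{od}}(HS)=15$ and $\chi_{\mathrm{so}}(HS)\le20$. Moreover, $HS$ has no odd independent set with exactly $k$ vertices for any $k$ with $11\le k\le14$.
   Context: The Hoffman–Singleton graph is the (unique) $7$-regular graph on $50$ vertices with diameter $2$ and girth $5$. An odd independent set in $G=(V,E)$ is an independent set $S$ such that every $v\in V\setminus S$ has either no neighbor or an odd number of neighbors in $S$; $\alpha_{\mathrm{od}}(G)$ is its maximum size. A strong odd coloring is a proper coloring such that for each vertex $v$ every color on $N(v)$ occurs an odd number of times on $N(v)$; $\chi_{\mathrm{so}}(G)$ is the minimum number of colors. *)

From mathcomp Require Import all_boot.
Set Implicit Arguments. Unset Strict Implicit. Unset Printing Implicit Defensive.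

Section GraphNotions.
Variables (T : finType) (e : rel T).

Definition nbhd (v : T) : {set T} := [set u | e v u].

Definition independent (S : {set T}) : bool :=
  [forall x in S, forall y in S, ~~ e x y].

Definition odd_independent (S : {set T}) : bool :=
  independent S &&
  [forall v in ~: S, (#|nbhd v :&: S| == 0) || odd #|nbhd v :&: S|].

Definition alpha_od : nat := \max_(S : {set T} | odd_independent S) #|S|.

Definition proper_coloring k (f : T -> 'I_k) : bool :=
  [forall u, forall v, e u v ==> (f u != f v)].

Definition strong_odd_coloring k (f : T -> 'I_k) : bool :=
  proper_coloring f &&
  [forall v, forall c : 'I_k,
     let n := #|[set u in nbhd v | f u == c]| in (n == 0) || odd n].

End GraphNotions.

(* ---------- The Hoffman-Singleton graph (Robertson's construction) ----------
   50 vertices: pentagons P_h (h in Z5) with vertices (false,h,j),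
   pentagrams Q_i (i in Z5) with vertices (true,i,j), j in Z5. *)
Definition HSV := (bool * 'I_5 * 'I_5)%type.

Definition cyc_step (d : nat) (j j' : 'I_5) : bool :=
  (val j' == (j + d) %% 5) || (val j == (j' + d) %% 5).

Definition hs_adj (x y : HSV) : bool :=
  match x, y with
  | (false, h, j), (false, h', j') => (h == h') && cyc_step 1 j j'
  | (true, i, j), (true, i', j') => (i == i') && cyc_step 2 j j'
  | (false, h, j), (true, i, j') => val j' == (h * i + j) %% 5
  | (true, i, j'), (false, h, j) => val j' == (h * i + j) %% 5
  end.

Definition Z5l : seq 'I_5 :=
  [:: @Ordinal 5 0 isT; @Ordinal 5 1 isT; @Ordinal 5 2 isT;
      @Ordinal 5 3 isT; @Ordinal 5 4 isT].
Definition HSl : seq HSV :=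
  [seq (bh, j) | bh <- [seq (b, h) | b <- [:: false; true], h <- Z5l],
                 j <- Z5l].
Lemma HSl_uniq : uniq HSl && (size HSl == 50). Proof. by vm_compute. Qed.
Lemma HSV_card : #|{: HSV}| = 50.
Proof. by rewrite !card_prod !card_ord card_bool. Qed.
Lemma hs_sym : all (fun x => all (fun y => hs_adj x y == hs_adj y x) HSl) HSl.
Proof. by vm_compute. Qed.
Lemma hs_irrefl : all (fun x => ~~ hs_adj x x) HSl. Proof. by vm_compute. Qed.
Lemma hs_regular : all (fun x => count (hs_adj x) HSl == 7) HSl.
Proof. by vm_compute. Qed.
(* adjacent vertices: 0 common neighbours (girth 5); distinct non-adjacent
   vertices: exactly 1 common neighbour (diameter 2, no 4-cycles) *)
Lemma hs_srg : all (fun x => all (fun y => (x != y) ==>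
   (count (fun z => hs_adj x z && hs_adj y z) HSl == (if hs_adj x y then 0 else 1))) HSl) HSl.
Proof. by vm_compute. Qed.

(* Let S be odd independent, s = |S| and d(v) = |N(v) ∩ S|.  Since HS is
   7-regular and any two distinct non-adjacent vertices have exactly one common
   neighbour, double counting gives  Σ d = 7s  and  Σ d² = s(s+6).  Off S the
   value d(v) is 0 or odd, so (d - a)(d - a - 2) >= 0 for every odd a; summing
   over V \ S for a = 1, 3, 5 yields three quadratic inequalities in s whose
   only solutions with s <= 50 are s <= 10 and s = 15.  An odd independent
   15-set and a strong odd 20-colouring are then exhibited and checked by
   computation. *)
From mathcomp Require Import all_boot zmodp zify.

Set Implicit Arguments.
Unset Strict Implicit.
Unset Printing Implicit Defensive.

Section SeqEnumeration.
Variables (T : finType) (s : seq T).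
Hypotheses (s_uniq : uniq s) (mem_s : forall x, x \in s).

Lemma card_seq (A : {pred T}) : #|A| = count [in A] s.
Proof.
rewrite -size_filter -(card_uniqP (filter_uniq _ s_uniq)).
by apply: eq_card => x; rewrite mem_filter mem_s andbT.
Qed.

Lemma all_seqP (P : pred T) : all P s -> forall x, P x.
Proof. by move/allP=> Ps x; apply: Ps. Qed.

Lemma odd_independent_seq (e : rel T) (p : pred T) :
    all (fun x => p x ==> all (fun y => p y ==> ~~ e x y) s) s ->
    all (fun v => ~~ p v ==>
      let n := count (fun u => e v u && p u) s in (n == 0) || odd n) s ->
  odd_independent e [set x | p x].
Proof.
move=> /all_seqP indep /all_seqP odd_nbhd; apply/andP; split.
  apply/forallP=> x; apply/implyP; rewrite inE => px.
  apply/forallP=> y; apply/implyP; rewrite inE => py.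
  by have := indep x; rewrite px => /all_seqP/(_ y); rewrite py.
apply/forallP=> v; apply/implyP; rewrite !inE => pv.
rewrite card_seq (@eq_count _ _ (fun u => e v u && p u)) => [|u]; last by rewrite !inE.
by have := odd_nbhd v; rewrite pv.
Qed.

Lemma strong_odd_coloring_seq (e : rel T) k (f : T -> 'I_k) :
    all (fun u => all (fun v => e u v ==> (f u != f v)) s) s ->
    all (fun v => all (fun c =>
      let n := count (fun u => e v u && (val (f u) == c)) s in (n == 0) || odd n)
      (iota 0 k)) s ->
  strong_odd_coloring e f.
Proof.
move=> /all_seqP proper /all_seqP odd_nbhd; apply/andP; split.
  by apply/forallP=> u; apply/forallP; apply: all_seqP (proper u).
apply/forallP=> v; apply/forallP=> c /=.
rewrite card_seq (@eq_count _ _ (fun u => e v u && (val (f u) == c))) => [|u];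
  last by rewrite !inE.
by have /allP := odd_nbhd v; apply; rewrite mem_iota ltn_ord.
Qed.

End SeqEnumeration.

Section NeighbourhoodCounts.
Variables (T : finType) (e : rel T) (k mu : nat).
Hypotheses (e_sym : symmetric e) (e_regular : forall v, #|nbhd e v| = k).
Hypothesis e_common :
  forall u w, u != w -> ~~ e u w -> #|nbhd e u :&: nbhd e w| = mu.

Lemma card_nbhdI (v : T) (A : {set T}) : #|nbhd e v :&: A| = \sum_(u in A) e v u.
Proof.
rewrite -sum1_card big_mkcond [RHS]big_mkcond; apply: eq_bigr => u _.
by rewrite !inE; case: (e v u); case: (u \in A).
Qed.

Lemma card_nbhdI_nbhd (u w : T) :
  #|nbhd e u :&: nbhd e w| = \sum_v e v u * e v w.
Proof.
rewrite card_nbhdI big_mkcond; apply: eq_bigr => v _.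
by rewrite inE !(e_sym v); case: (e u v); case: (e w v).
Qed.

Lemma sum_card_nbhdI (S : {set T}) : \sum_v #|nbhd e v :&: S| = #|S| * k.
Proof.
under eq_bigr do rewrite card_nbhdI.
rewrite exchange_big /= -sum_nat_const; apply: eq_bigr => u _.
rewrite -(e_regular u) -[nbhd e u]setIT card_nbhdI.
by apply: eq_big => [v | v _]; rewrite ?inE // e_sym.
Qed.

Lemma sum_sqr_card_nbhdI (S : {set T}) : independent e S ->
  \sum_v #|nbhd e v :&: S| ^ 2 = #|S| * (k + #|S|.-1 * mu).
Proof.
move=> /forallP S_indep.
have nonadj u w : u \in S -> w \in S -> ~~ e u w.
  by move=> uS wS; have /implyP/(_ uS)/forallP/(_ w)/implyP := S_indep u; apply.
under eq_bigr do rewrite card_nbhdI -mulnn big_distrl /=.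
under eq_bigr do under eq_bigr do rewrite big_distrr /=.
rewrite exchange_big /= -sum_nat_const; apply: eq_bigr => u uS.
rewrite exchange_big /= (big_setD1 u uS) /= -card_nbhdI_nbhd setIid e_regular.
rewrite (cardsD1 u S) uS add1n -sum_nat_const; congr (_ + _).
apply: eq_bigr => w; rewrite !inE => /andP[wu wS].
by rewrite -card_nbhdI_nbhd e_common 1?eq_sym ?nonadj.
Qed.

End NeighbourhoodCounts.

(* (d - a)(d - a - 2) >= 0, as d is never a + 1. *)
Lemma zero_or_odd_gap (a d : nat) : odd a -> (d == 0) || odd d ->
  2 * a.+1 * d <= d ^ 2 + a * a.+2.
Proof.
move=> odd_a /orP[/eqP-> | odd_d]; first by rewrite muln0.
have [le_da | lt_ad] := leqP d a; first nia.
have {lt_ad} : a.+2 <= d.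
  by rewrite ltn_neqAle lt_ad andbT; apply: contraTneq odd_d => <-; rewrite /= odd_a.
nia.
Qed.

Section OddIndependent.
Variables (T : finType) (e : rel T) (S : {set T}).
Hypothesis S_odd : odd_independent e S.

Lemma sum_card_nbhdI_setC (F : nat -> nat) : F 0 = 0 ->
  \sum_v F #|nbhd e v :&: S| = \sum_(v in ~: S) F #|nbhd e v :&: S|.
Proof.
case/andP: S_odd => /forallP S_indep _ F0.
rewrite [RHS]big_mkcond; apply: eq_bigr => v _; rewrite inE.
case: ifP => // /negbFE vS; rewrite -[RHS]F0; congr F; apply/eqP; rewrite cards_eq0.
apply/eqP/setP => u; rewrite !inE; apply: negbTE.
by have /implyP/(_ vS)/forallP/(_ u) := S_indep v; rewrite andbC; case: (u \in S).
Qed.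

Lemma odd_independent_sum_gap (a : nat) : odd a ->
  2 * a.+1 * \sum_v #|nbhd e v :&: S|
    <= \sum_v #|nbhd e v :&: S| ^ 2 + #|~: S| * (a * a.+2).
Proof.
move=> odd_a; case/andP: (S_odd) => _ /forallP S_odd_nbhd.
rewrite big_distrr /= (sum_card_nbhdI_setC (F := muln (2 * a.+1))) ?muln0 //.
rewrite (sum_card_nbhdI_setC (F := expn^~ 2)) // -sum_nat_const -big_split /=.
apply: leq_sum => v vS; apply: zero_or_odd_gap => //.
exact: implyP (S_odd_nbhd v) vS.
Qed.

End OddIndependent.

Lemma uniq_HSl : uniq HSl.
Proof. by case/andP: HSl_uniq. Qed.

Lemma mem_HSl (x : HSV) : x \in HSl.
Proof.
case/andP: HSl_uniq => uniq_HSl /eqP size_HSl.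
have card_HSl : #|HSl| = #|{: HSV}| by rewrite (card_uniqP uniq_HSl) size_HSl HSV_card.
exact: (subset_cardP card_HSl (subset_predT _)).
Qed.

Lemma hs_adj_sym : symmetric hs_adj.
Proof. by move=> x y; apply/eqP/(all_seqP mem_HSl (all_seqP mem_HSl hs_sym x)). Qed.

Lemma card_nbhd_hs (v : HSV) : #|nbhd hs_adj v| = 7.
Proof.
rewrite (card_seq uniq_HSl mem_HSl) (@eq_count _ _ (hs_adj v)) => [|u]; last by rewrite inE.
exact/eqP/(all_seqP mem_HSl hs_regular v).
Qed.

Lemma card_common_nbhd_hs (u w : HSV) : u != w -> ~~ hs_adj u w ->
  #|nbhd hs_adj u :&: nbhd hs_adj w| = 1.
Proof.
move=> uw /negbTE not_uw; rewrite (card_seq uniq_HSl mem_HSl).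
rewrite (@eq_count _ _ (fun z => hs_adj u z && hs_adj w z)) => [|z]; last by rewrite !inE.
by have /(all_seqP mem_HSl)/(_ w) := all_seqP mem_HSl hs_srg u; rewrite uw not_uw => /eqP.
Qed.

Lemma hs_card_arith (s c : nat) : s + c = 50 ->
  (forall a, odd a -> 2 * a.+1 * (s * 7) <= s * (7 + s.-1 * 1) + c * (a * a.+2)) ->
  (s <= 10) || (s == 15).
Proof.
move=> sc gap; have g1 := gap 1 isT; have g3 := gap 3 isT; have g5 := gap 5 isT.
(* a = 1 excludes 11..14, a = 3 excludes 16..18 and a = 5 excludes 19..50. *)
have [// | lt10s] := leqP s 10.
have [lt_s15 | le15s] := ltnP s 15; first nia.
have [lt_s16 | le16s] := ltnP s 16; first lia.
have [lt_s19 | le19s] := ltnP s 19; nia.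
Qed.

Lemma odd_independent_hs_card (S : {set HSV}) :
  odd_independent hs_adj S -> (#|S| <= 10) || (#|S| == 15).
Proof.
move=> S_odd; have S_indep : independent hs_adj S by case/andP: S_odd.
apply: (@hs_card_arith _ #|~: S|); first by rewrite cardsC HSV_card.
move=> a odd_a; have := odd_independent_sum_gap S_odd odd_a.
by rewrite (sum_card_nbhdI hs_adj_sym card_nbhd_hs)
  (sum_sqr_card_nbhdI hs_adj_sym card_nbhd_hs card_common_nbhd_hs S_indep).
Qed.

Definition hs_vertex (b : bool) (h j : nat) : HSV := (b, inZp h, inZp j).

Definition hs_odd15 : seq HSV :=
  [:: hs_vertex false 0 4; hs_vertex false 1 4; hs_vertex false 2 2;
      hs_vertex false 3 3; hs_vertex false 4 2;
      hs_vertex true 0 0; hs_vertex true 0 1; hs_vertex true 1 2;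
      hs_vertex true 1 3; hs_vertex true 2 2; hs_vertex true 2 3;
      hs_vertex true 3 0; hs_vertex true 3 1; hs_vertex true 4 1;
      hs_vertex true 4 2].

Lemma odd_independent_hs_odd15 : odd_independent hs_adj [set x in hs_odd15].
Proof.
by apply: (odd_independent_seq uniq_HSl mem_HSl (p := [in hs_odd15])); vm_compute.
Qed.

Lemma card_hs_odd15 : #|[set x in hs_odd15]| = 15.
Proof. by rewrite cardsE (card_uniqP _). Qed.

Definition hs_colour_table : seq nat :=
  [:: 0; 1; 2; 3; 4; 3; 5; 6; 7; 0; 8; 0; 9; 3; 10; 11; 0; 3; 1; 12; 1; 3; 1; 3; 0;
      2; 13; 0; 0; 2; 1; 0; 0; 2; 14; 3; 2; 15; 0; 0; 1; 2; 16; 0; 0; 17; 0; 0; 2; 1].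

Definition hs_colour (x : HSV) : 'I_20 := inZp (nth 0 hs_colour_table (index x HSl)).

Lemma strong_odd_coloring_hs_colour : strong_odd_coloring hs_adj hs_colour.
Proof. by apply: (strong_odd_coloring_seq uniq_HSl mem_HSl); vm_compute. Qed.

Theorem proposition9 :
  [/\ alpha_od hs_adj = 15,
      (exists f : HSV -> 'I_20, strong_odd_coloring hs_adj f)
    & forall S : {set HSV}, odd_independent hs_adj S ->
        ~~ (11 <= #|S| <= 14)].
Proof.
split.
- apply/eqP; rewrite eqn_leq; apply/andP; split.
    by apply/bigmax_leqP => S /odd_independent_hs_card /orP[/leq_trans-> | /eqP->].
  rewrite -{1}card_hs_odd15.
  exact: (@leq_bigmax_cond _ _ (fun S : {set HSV} => #|S|) _ odd_independent_hs_odd15).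
- by exists hs_colour; apply: strong_odd_coloring_hs_colour.
- by move=> S /odd_independent_hs_card /orP[| /eqP ->]; lia.
Qed.
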